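(* For every $n \ge 1$, every extremal point $\rho$ of $\Gamma(n)$ satisfies $\mathrm{rank}(\rho) \le \sqrt{2n^2 - 1}$. Equivalently, $MR(n) \le \sqrt{2n^2-1}$.
   Context: A state $\rho$ on $M_n(\mathbb{C}) \otimes M_n(\mathbb{C})$ is a marginal tracial state if $\rho(A\otimes I) = \mathrm{tr}(A)$ and $\rho(I \otimes B) = \mathrm{tr}(B)$ for all $A,B \in M_n(\mathbb{C})$, where $\mathrm{tr}$ is the normalized trace. $\Gamma(n)$ is the convex set of all marginal tracial states on $M_n(\mathbb{C}) \otimes M_n(\mathbb{C})$. For a state $\rho$, $\mathrm{rank}(\rho)$ is the rank of its density matrix. $MR(n)$ denotes the maximum of $\mathrm{rank}(\rho)$ over all extremal points $\rho$ of $\Gamma(n)$. *)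

(* Complex numbers: an arbitrary numClosedFieldType C
   (algebraically closed field with conjugation and the usual order/norm),
   e.g. algC; the result is stated for all such C. *)
From HB Require Import structures.
From mathcomp Require Import all_boot all_order all_algebra.
Set Implicit Arguments. Unset Strict Implicit. Unset Printing Implicit Defensive.
Import Order.TTheory GRing.Theory Num.Theory.
Local Open Scope ring_scope.

(* Decomposition of an index of C^n (x) C^n = C^(n*n) into a pair of indices,
   inverse to mxvec_index. *)
Definition tidx (n : nat) (k : 'I_(n * n)) : 'I_n * 'I_n :=
  enum_val (cast_ord (esym (mxvec_cast n n)) k).

Definition kron (C : nzRingType) (n : nat) (A B : 'M[C]_n) : 'M[C]_(n * n) :=
  \matrix_(k, l) (A (tidx k).1 (tidx l).1 * B (tidx k).2 (tidx l).2).

Definition psd (C : numClosedFieldType) (m : nat) (D : 'M[C]_m) : Prop :=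
  forall v : 'cV[C]_m, 0 <= ((map_mx Num.conj v)^T *m D *m v) 0 0.

(* The state rho on M_n (x) M_n with density matrix D: rho(X) = Tr(D X). *)
Definition stateval (C : numClosedFieldType) (n : nat) (D X : 'M[C]_(n * n)) : C :=
  \tr (D *m X).

Definition is_state (C : numClosedFieldType) (n : nat) (D : 'M[C]_(n * n)) : Prop :=
  psd D /\ \tr D = 1.

Definition ntr (C : numClosedFieldType) (n : nat) (A : 'M[C]_n) : C :=
  \tr A / n%:R.

Definition Gamma (C : numClosedFieldType) (n : nat) (D : 'M[C]_(n * n)) : Prop :=
  is_state D /\
  (forall A : 'M[C]_n, stateval D (kron A 1%:M) = ntr A) /\
  (forall B : 'M[C]_n, stateval D (kron 1%:M B) = ntr B).

Definition extremal_Gamma (C : numClosedFieldType) (n : nat) (D : 'M[C]_(n * n)) : Prop :=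
  Gamma D /\
  forall (D1 D2 : 'M[C]_(n * n)) (t : C),
    Gamma D1 -> Gamma D2 -> 0 < t -> t < 1 ->
    D = t *: D1 + (1 - t) *: D2 -> D1 = D /\ D2 = D.

(* Let D be extremal in Gamma(n) with rank r and let B be an r x n^2 row base of D.
   For a hermitian r x r matrix Y, the compression H = B^* Y B is dominated by D, so
   D + e H and D - e H are positive for small e > 0; if moreover both marginals of H
   vanish, both lie in Gamma(n) and extremality forces H = 0, i.e. Y = 0.  Vanishing
   marginals are 2 n^2 complex linear conditions on Y, only 2 n^2 - 1 of them
   independent since both marginals of H have trace tr H, and the solution space is
   closed under Y |-> Y^*.  So if r^2 > 2 n^2 - 1 it contains some Y <> 0, and then
   Y + Y^* or i Y - i Y^* is a nonzero hermitian solution. *)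

From HB Require Import structures.
From mathcomp Require Import all_boot all_order all_algebra ring.
Import Order.TTheory GRing.Theory Num.Theory.
Set Implicit Arguments. Unset Strict Implicit. Unset Printing Implicit Defensive.
Local Open Scope ring_scope.

Section SesquilinearForms.
Variable C : numClosedFieldType.

Definition ctrmx m k (A : 'M[C]_(m, k)) : 'M[C]_(k, m) := (map_mx Num.conj A)^T.

Lemma ctrmxE m k (A : 'M[C]_(m, k)) i j : ctrmx A i j = (A j i)^*.
Proof. by rewrite !mxE. Qed.

Lemma ctrmxD m k (A B : 'M[C]_(m, k)) : ctrmx (A + B) = ctrmx A + ctrmx B.
Proof. by apply/matrixP=> i j; rewrite !mxE rmorphD. Qed.

Lemma ctrmxZ m k (a : C) (A : 'M[C]_(m, k)) : ctrmx (a *: A) = a^* *: ctrmx A.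
Proof. by apply/matrixP=> i j; rewrite !mxE rmorphM. Qed.

Lemma ctrmxK m k (A : 'M[C]_(m, k)) : ctrmx (ctrmx A) = A.
Proof. by apply/matrixP=> i j; rewrite !mxE conjCK. Qed.

Lemma ctrmxM m k p (A : 'M[C]_(m, k)) (B : 'M[C]_(k, p)) :
  ctrmx (A *m B) = ctrmx B *m ctrmx A.
Proof. by rewrite /ctrmx map_mxM trmx_mul. Qed.

Lemma ctrmx1 m : ctrmx (1%:M : 'M[C]_m) = 1%:M.
Proof. by apply/matrixP=> i j; rewrite !mxE eq_sym rmorph_nat. Qed.

Lemma mxtrace_ctrmx m (A : 'M[C]_m) : \tr (ctrmx A) = (\tr A)^*.
Proof. by rewrite /mxtrace rmorph_sum; apply: eq_bigr => i _; rewrite ctrmxE. Qed.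

Definition sform m (A : 'M[C]_m) (u v : 'cV[C]_m) : C := (ctrmx u *m A *m v) 0 0.

Definition sqnorm m (x : 'cV[C]_m) : C := (ctrmx x *m x) 0 0.

Definition compress m r (B : 'M[C]_(r, m)) (Y : 'M[C]_r) : 'M[C]_m :=
  ctrmx B *m Y *m B.

Lemma sform_comb m (A : 'M[C]_m) (u v : 'cV[C]_m) (a b : C) :
  sform A (a *: u + b *: v) (a *: u + b *: v) =
  a^* * a * sform A u u + a^* * b * sform A u v
  + b^* * a * sform A v u + b^* * b * sform A v v.
Proof.
by rewrite /sform ctrmxD !ctrmxZ !mulmxDl !mulmxDr -!scalemxAl -!scalemxAr !scalerA !mxE !addrA.
Qed.

Lemma sform_conj m (A : 'M[C]_m) (u v : 'cV[C]_m) :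
  (sform A u v)^* = sform (ctrmx A) v u.
Proof. by rewrite /sform -ctrmxE !ctrmxM ctrmxK mulmxA. Qed.

Lemma sformD m (A B : 'M[C]_m) u v : sform (A + B) u v = sform A u v + sform B u v.
Proof. by rewrite /sform mulmxDr mulmxDl mxE. Qed.

Lemma sformZ m (c : C) (A : 'M[C]_m) u v : sform (c *: A) u v = c * sform A u v.
Proof. by rewrite /sform -scalemxAr -scalemxAl mxE. Qed.

Lemma sform_compress m r (B : 'M[C]_(r, m)) (Y : 'M[C]_r) (x : 'cV[C]_m) :
  sform (compress B Y) x x = sform Y (B *m x) (B *m x).
Proof. by rewrite /sform /compress ctrmxM !mulmxA. Qed.

Lemma sqnorm_mul m k (M : 'M[C]_(k, m)) (x : 'cV[C]_m) :
  sqnorm (M *m x) = sform (ctrmx M *m M) x x.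
Proof. by rewrite /sqnorm /sform ctrmxM !mulmxA. Qed.

Lemma sqnormE m (x : 'cV[C]_m) : sqnorm x = \sum_k `|x k 0| ^+ 2.
Proof. by rewrite /sqnorm mxE; apply: eq_bigr => k _; rewrite ctrmxE normCKC. Qed.

Lemma sqnorm_ge0 m (x : 'cV[C]_m) : 0 <= sqnorm x.
Proof. by rewrite sqnormE sumr_ge0 // => k _; rewrite exprn_ge0. Qed.

Lemma sqnorm_entry_le m (x : 'cV[C]_m) i : `|x i 0| ^+ 2 <= sqnorm x.
Proof.
by rewrite sqnormE (bigD1 i) //= lerDl sumr_ge0 // => k _; rewrite exprn_ge0.
Qed.

Lemma compressD m r (B : 'M[C]_(r, m)) (Y Y' : 'M[C]_r) :
  compress B (Y + Y') = compress B Y + compress B Y'.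
Proof. by rewrite /compress mulmxDr mulmxDl. Qed.

Lemma compressZ m r (B : 'M[C]_(r, m)) (a : C) (Y : 'M[C]_r) :
  compress B (a *: Y) = a *: compress B Y.
Proof. by rewrite /compress -scalemxAr -scalemxAl. Qed.

Lemma compress_ctrmx m r (B : 'M[C]_(r, m)) (Y : 'M[C]_r) :
  compress B (ctrmx Y) = ctrmx (compress B Y).
Proof. by rewrite /compress !ctrmxM ctrmxK mulmxA. Qed.

End SesquilinearForms.

Section PositiveSemidefinite.
Variable C : numClosedFieldType.

Lemma psd_sform_ge0 m (D : 'M[C]_m) v : psd D -> 0 <= sform D v v.
Proof. by move=> /(_ v). Qed.

(* Polarization: the reality of the form on [u + v] and [u + 'i v]. *)
Lemma psd_sformC m (D : 'M[C]_m) u v : psd D -> sform D v u = (sform D u v)^*.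
Proof.
move=> hD; set p := sform D u v; set q := sform D v u.
have real_diag w : sform D w w \is Num.real by exact/ger0_real/psd_sform_ge0.
have real_comb (b : C) : b * p + b^* * q \is Num.real.
  have := real_diag (1 *: u + b *: v).
  rewrite sform_comb rmorph1 !mul1r mulr1 -normCKC -/p -/q.
  have real_last : `|b| ^+ 2 * sform D v v \is Num.real.
    by rewrite rpredM ?rpredX ?normr_real.
  by rewrite (rpredDr _ real_last) -addrA (rpredDl _ (real_diag u)).
have /CrealP e1 := real_comb 1; have /CrealP e2 := real_comb 'i.
rewrite rmorph1 !mul1r rmorphD /= in e1.
rewrite rmorphD !rmorphM /= conjCK conjCi !mulNr in e2.
have i_neq0 : ('i : C) != 0 by rewrite -normr_eq0 normCi oner_eq0.
have e2' : q^* - p^* = p - q.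
  by apply: (mulfI i_neq0); rewrite !mulrBr addrC e2.
suff <- : q^* = p by rewrite conjCK.
have two_q : q^* *+ 2 = p *+ 2.
  transitivity ((p^* + q^*) + (q^* - p^*)); first ring.
  by rewrite e1 e2'; ring.
by move/eqP: two_q; rewrite -subr_eq0 -mulrnBl mulrn_eq0 /= subr_eq0 => /eqP.
Qed.

End PositiveSemidefinite.

Section Domination.
Variable C : numClosedFieldType.

Definition l1norm m k (P : 'M[C]_(m, k)) : C := \sum_i \sum_j `|P i j|.

Lemma l1norm_ge0 m k (P : 'M[C]_(m, k)) : 0 <= l1norm P.
Proof. by rewrite sumr_ge0 // => i _; rewrite sumr_ge0. Qed.

Lemma normr_mul_entry_le m (x : 'cV[C]_m) i j : `|x i 0| * `|x j 0| <= sqnorm x.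
Proof.
apply: le_trans (real_leif_mean_square (normr_real _) (normr_real _)).1 _.
rewrite ler_pdivrMr ?ltr0n // mulr_natr mulr2n.
by rewrite lerD ?sqnorm_entry_le.
Qed.

Lemma sform_le m (P : 'M[C]_m) (x : 'cV[C]_m) : `|sform P x x| <= l1norm P * sqnorm x.
Proof.
rewrite /sform mxE (le_trans (ler_norm_sum _ _ _)) // /l1norm mulr_suml.
under [X in _ <= X]eq_bigr => i _ do rewrite mulr_suml.
rewrite exchange_big /=; apply: ler_sum => j _; rewrite normrM mxE.
apply: (le_trans (ler_wpM2r (normr_ge0 _) (ler_norm_sum _ _ _))).
rewrite mulr_suml; apply: ler_sum => i _.
rewrite ctrmxE normrM norm_conjC mulrAC mulrC.
exact/ler_wpM2l/normr_mul_entry_le.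
Qed.

(* Expand [0 <= sform D (c v - D v) (c v - D v)] with [c := l1norm D + 1]. *)
Lemma psd_sqnorm_mul_le m (D : 'M[C]_m) v : psd D ->
  sqnorm (D *m v) <= (l1norm D + 1) * sform D v v.
Proof.
move=> hD; set w := D *m v; set s := sqnorm w; set c := l1norm D + 1.
have c_gt0 : 0 < c by rewrite ltr_wpDl ?l1norm_ge0.
have c_conj : c^* = c by exact/conj_Creal/gtr0_real.
have swv : sform D w v = s by rewrite /sform -mulmxA.
have svw : sform D v w = s.
  by rewrite (psd_sformC _ _ hD) swv; exact/conj_Creal/ger0_real/sqnorm_ge0.
have sww : sform D w w <= (c - 1) * s.
  rewrite addrK; apply: le_trans (sform_le _ _).
  exact/real_ler_norm/ger0_real/psd_sform_ge0.
have expand := psd_sform_ge0 (c *: v + (-1) *: w) hD.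
rewrite sform_comb c_conj swv svw rmorphN rmorph1 !mulN1r mulrN1 opprK mul1r in expand.
rewrite -(ler_pM2l c_gt0) mulrA -subr_ge0; apply: le_trans expand _.
rewrite !mulNr -!addrA lerD2l -[X in _ <= X]addr0 lerD2l addrC subr_le0.
by apply: le_trans sww _; rewrite mulrBl mul1r lerBlDr lerDl sqnorm_ge0.
Qed.

Lemma psd_add_dominated m (D H : 'M[C]_m) :
  (forall v, sform H v v \is Num.real) -> (forall v, `|sform H v v| <= sform D v v) ->
  psd (D + H).
Proof.
move=> H_real H_le v; rewrite -/(sform _ v v) sformD.
move: (H_le v); rewrite real_ler_norml // => /andP[lowH _].
by rewrite -subr_ge0 opprK addrC in lowH.
Qed.

(* The compression of a hermitian [Y] to the range of [D] is dominated by [D]. *)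
Lemma psd_perturb m r (D : 'M[C]_m) (B Z : 'M[C]_(r, m)) (Y : 'M[C]_r) :
  psd D -> B = Z *m D -> ctrmx Y = Y ->
  exists2 e : C, 0 < e & psd (D + e *: compress B Y) /\ psd (D - e *: compress B Y).
Proof.
move=> hD hB hY; set H := compress B Y.
set K := l1norm Y * (l1norm (ctrmx Z *m Z) * (l1norm D + 1)).
have K_ge0 : 0 <= K by rewrite !mulr_ge0 ?addr_ge0 ?l1norm_ge0.
have H_le v : `|sform H v v| <= K * sform D v v.
  rewrite sform_compress; apply: le_trans (sform_le _ _) _.
  rewrite -mulrA ler_wpM2l ?l1norm_ge0 // hB -mulmxA sqnorm_mul.
  have := sqnorm_ge0 (Z *m (D *m v)); rewrite sqnorm_mul => /ger0_real/real_ler_norm.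
  move=> /le_trans; apply; apply: le_trans (sform_le _ _) _.
  by rewrite -mulrA ler_wpM2l ?l1norm_ge0 ?psd_sqnorm_mul_le.
have H_real v : sform H v v \is Num.real.
  by apply/CrealP; rewrite sform_conj /H -compress_ctrmx hY.
set e := (K + 1)^-1.
have e_gt0 : 0 < e by rewrite invr_gt0 ltr_wpDl.
have eK_le1 : e * K <= 1 by rewrite mulrC ler_pdivrMr ?ltr_wpDl // mul1r lerDl.
have small c : c \is Num.real -> `|c| <= e -> psd (D + c *: H).
  move=> c_real c_le; apply: psd_add_dominated => v; rewrite sformZ ?rpredM //.
  rewrite normrM (le_trans (ler_wpM2r (normr_ge0 _) c_le)) //.
  apply: le_trans (ler_wpM2l (ltW e_gt0) (H_le v)) _.
  by rewrite mulrA ler_piMl ?psd_sform_ge0.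
exists e => //; rewrite -scaleNr.
by split; apply: small; rewrite ?rpredN ?normrN ?gtr0_real ?gtr0_norm.
Qed.

End Domination.

Lemma linear_comb_sum (C : nzRingType) (V : lmodType C) (f : V -> C) :
  (forall a x y, f (a *: x + y) = a * f x + f y) ->
  forall (I : Type) (r : seq I) (c : I -> C) (X : I -> V),
  f (\sum_(i <- r) c i *: X i) = \sum_(i <- r) c i * f (X i).
Proof.
move=> f_lin I r c X.
have f0 : f 0 = 0.
  have := f_lin 1 0 0; rewrite scaler0 addr0 mul1r => f00.
  by apply: (addrI (f 0)); rewrite addr0 -f00.
elim: r => [|x r IH]; first by rewrite !big_nil.
by rewrite !big_cons f_lin IH.
Qed.

Section Marginals.
Variables (C : numClosedFieldType) (n : nat).

Definition tidxI (p : 'I_n * 'I_n) : 'I_(n * n) :=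
  cast_ord (mxvec_cast n n) (enum_rank p).

Lemma tidxK : cancel (@tidx n) tidxI.
Proof. by move=> k; rewrite /tidx /tidxI enum_valK cast_ordKV. Qed.

Lemma tidxIK : cancel tidxI (@tidx n).
Proof. by move=> p; rewrite /tidx /tidxI cast_ordK enum_rankK. Qed.

Definition tunit (k : 'I_(n * n)) : 'M[C]_n := delta_mx (tidx k).1 (tidx k).2.

Lemma matrix_sum_tunit (A : 'M[C]_n) : A = \sum_k A (tidx k).1 (tidx k).2 *: tunit k.
Proof.
rewrite {1}(matrix_sum_delta A) pair_bigA /= (reindex (@tidx n)) //=.
by exists tidxI => x _; rewrite ?tidxK ?tidxIK.
Qed.

Lemma kron_linearl (a : C) (A A' B : 'M[C]_n) : kron (a *: A + A') B = a *: kron A B + kron A' B.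
Proof. by apply/matrixP=> i j; rewrite !mxE mulrDl mulrA. Qed.

Lemma kron_linearr (a : C) (A B B' : 'M[C]_n) : kron A (a *: B + B') = a *: kron A B + kron A B'.
Proof. by apply/matrixP=> i j; rewrite !mxE mulrDr mulrCA. Qed.

Lemma kron1 : kron (1%:M : 'M[C]_n) 1%:M = 1%:M.
Proof.
apply/matrixP=> k l; rewrite !mxE -natrM mulnb -xpair_eqE -!surjective_pairing.
by rewrite (inj_eq (can_inj tidxK)).
Qed.

Lemma ctrmx_kron (A B : 'M[C]_n) : ctrmx (kron A B) = kron (ctrmx A) (ctrmx B).
Proof. by apply/matrixP=> k l; rewrite !mxE rmorphM. Qed.

Lemma stateval_linearr (a : C) (H X Y : 'M[C]_(n * n)) :
  stateval H (a *: X + Y) = a * stateval H X + stateval H Y.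
Proof. by rewrite /stateval mulmxDr -scalemxAr mxtraceD mxtraceZ. Qed.

Lemma statevalDl (H H' X : 'M[C]_(n * n)) :
  stateval (H + H') X = stateval H X + stateval H' X.
Proof. by rewrite /stateval mulmxDl mxtraceD. Qed.

Lemma statevalZl (a : C) (H X : 'M[C]_(n * n)) : stateval (a *: H) X = a * stateval H X.
Proof. by rewrite /stateval -scalemxAl mxtraceZ. Qed.

Lemma stateval_ctrmx (H K : 'M[C]_(n * n)) : stateval (ctrmx H) K = (stateval H (ctrmx K))^*.
Proof. by rewrite /stateval -mxtrace_ctrmx ctrmxM ctrmxK mxtrace_mulC. Qed.

Lemma stateval_kron_sum_l (H : 'M[C]_(n * n)) (A : 'M[C]_n) :
  stateval H (kron A 1%:M) = \sum_k A (tidx k).1 (tidx k).2 * stateval H (kron (tunit k) 1%:M).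
Proof.
rewrite {1}(matrix_sum_tunit A) (linear_comb_sum (f := fun X => stateval H (kron X 1%:M))) //.
by move=> a x y; rewrite kron_linearl stateval_linearr.
Qed.

Lemma stateval_kron_sum_r (H : 'M[C]_(n * n)) (B : 'M[C]_n) :
  stateval H (kron 1%:M B) = \sum_k B (tidx k).1 (tidx k).2 * stateval H (kron 1%:M (tunit k)).
Proof.
rewrite {1}(matrix_sum_tunit B) (linear_comb_sum (f := fun X => stateval H (kron 1%:M X))) //.
by move=> a x y; rewrite kron_linearr stateval_linearr.
Qed.

Definition null_marginals (H : 'M[C]_(n * n)) : Prop :=
  (forall A, stateval H (kron A 1%:M) = 0) /\ (forall B, stateval H (kron 1%:M B) = 0).

Lemma null_marginals_tunit (H : 'M[C]_(n * n)) :
  (forall k, stateval H (kron (tunit k) 1%:M) = 0) ->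
  (forall k, stateval H (kron 1%:M (tunit k)) = 0) -> null_marginals H.
Proof.
move=> H1 H2; split=> A; rewrite ?stateval_kron_sum_l ?stateval_kron_sum_r.
  by rewrite big1 // => k _; rewrite H1 mulr0.
by rewrite big1 // => k _; rewrite H2 mulr0.
Qed.

Lemma null_marginals_ctrmx (H : 'M[C]_(n * n)) :
  null_marginals H -> null_marginals (ctrmx H).
Proof.
by case=> H1 H2; split=> A; rewrite stateval_ctrmx ctrmx_kron ctrmx1 ?H1 ?H2 rmorph0.
Qed.

Lemma null_marginals_comb (a b : C) (H H' : 'M[C]_(n * n)) :
  null_marginals H -> null_marginals H' -> null_marginals (a *: H + b *: H').
Proof.
case=> H1 H2 [H1' H2']; split=> A; rewrite statevalDl !statevalZl.
  by rewrite H1 H1' !mulr0 addr0.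
by rewrite H2 H2' !mulr0 addr0.
Qed.

End Marginals.

Section Extremality.
Variables (C : numClosedFieldType) (n : nat).
Implicit Types D H : 'M[C]_(n * n).

Lemma Gamma_perturb D H (c : C) :
  Gamma D -> psd (D + c *: H) -> null_marginals H -> Gamma (D + c *: H).
Proof.
move=> [[_ trD] [D1 D2]] hp [H1 H2].
have trH : \tr H = 0 by rewrite -(H1 1%:M) /stateval kron1 mulmx1.
split; first by split=> //; rewrite mxtraceD mxtraceZ trH mulr0 addr0.
by split=> A; rewrite statevalDl statevalZl ?H1 ?H2 mulr0 addr0 ?D1 ?D2.
Qed.

(* [D] is the midpoint of the two perturbations [D + e H] and [D - e H]. *)
Lemma extremal_rigid r D (B Z : 'M[C]_(r, n * n)) (C0 : 'M[C]_(n * n, r)) (Y : 'M[C]_r) :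
  extremal_Gamma D -> B = Z *m D -> B *m C0 = 1%:M -> ctrmx Y = Y -> Y != 0 ->
  ~ null_marginals (compress B Y).
Proof.
move=> [GD D_ext] hZ hC0 hY Y_neq0 H0; set H := compress B Y in H0.
have H_neq0 : H != 0.
  apply: contra Y_neq0 => /eqP H_eq0.
  have <- : compress C0 H = Y.
    by rewrite /H /compress !mulmxA -ctrmxM hC0 ctrmx1 mul1mx -mulmxA hC0 mulmx1.
  by rewrite H_eq0 /compress mulmx0 mul0mx.
have [e e_gt0 [psd_plus psd_minus]] := psd_perturb GD.1.1 hZ hY.
rewrite -/H -scaleNr in psd_minus.
have half_gt0 : (0 : C) < 2^-1 by rewrite invr_gt0 ltr0n.
have half_lt1 : (2^-1 : C) < 1 by rewrite invf_lt1 ?ltr0n // ltr1n.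
have one_sub_half : (1 : C) - 2^-1 = 2^-1 by rewrite {1}(splitr 1) mul1r addrK.
have D_mid : D = 2^-1 *: (D + e *: H) + (1 - 2^-1) *: (D + - e *: H).
  rewrite one_sub_half -scalerDr addrACA scaleNr subrr addr0 -mulr2n -scaler_nat.
  by rewrite scalerA mulVf ?pnatr_eq0 // scale1r.
have [/eqP] := D_ext _ _ _ (Gamma_perturb GD psd_plus H0)
  (Gamma_perturb GD psd_minus H0) half_gt0 half_lt1 D_mid.
rewrite -subr_eq0 addrC addKr scaler_eq0 (negbTE H_neq0) orbF.
by rewrite (negbTE (lt0r_neq0 e_gt0)).
Qed.

End Extremality.

Lemma split_lshift m k (i : 'I_m) : split (lshift k i) = inl i.
Proof. exact: (unsplitK (inl _ i)). Qed.

Lemma split_rshift m k (i : 'I_k) : split (rshift m i) = inr i.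
Proof. exact: (unsplitK (inr _ i)). Qed.

Section DimensionCount.
Variables (C : numClosedFieldType) (n : nat).

Definition marginal_obs (q : 'I_(n * n + n * n)) : 'M[C]_(n * n) :=
  match split q with
  | inl k => kron (tunit C k) 1%:M
  | inr k => kron 1%:M (tunit C k)
  end.

(* Both marginals of any [H] have trace [\tr H]: this one linear relation among
   the [2 n^2] marginal coordinates is what gives the bound [2 n^2 - 1]. *)
Definition trace_weights : 'cV[C]_(n * n + n * n) :=
  \col_q match split q with
  | inl k => (1%:M : 'M[C]_n) (tidx k).1 (tidx k).2
  | inr k => - (1%:M : 'M[C]_n) (tidx k).1 (tidx k).2
  end.

Lemma trace_weights_neq0 : (0 < n)%N -> trace_weights != 0.
Proof.
move=> n_gt0; set i := Ordinal n_gt0.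
apply/negP => /eqP/matrixP/(_ (lshift _ (tidxI (i, i))) 0).
by rewrite !mxE split_lshift tidxIK mxE eqxx => /eqP; rewrite oner_eq0.
Qed.

Lemma marginals_trace_weights (H : 'M[C]_(n * n)) :
  \sum_q stateval H (marginal_obs q) * trace_weights q 0 = 0.
Proof.
rewrite big_split_ord /=.
under eq_bigr => k _ do rewrite /marginal_obs mxE split_lshift mulrC.
under [X in _ + X]eq_bigr => k _ do rewrite /marginal_obs mxE split_rshift mulrN mulrC.
by rewrite sumrN -stateval_kron_sum_l -stateval_kron_sum_r subrr.
Qed.

Variables (r : nat) (B : 'M[C]_(r, n * n)).

Definition marginal_mx : 'M[C]_(r * r, n * n + n * n) :=
  \matrix_(p, q) stateval (compress B (vec_mx (delta_mx 0 p))) (marginal_obs q).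

Lemma marginal_mxE u q :
  (u *m marginal_mx) 0 q = stateval (compress B (vec_mx u)) (marginal_obs q).
Proof.
rewrite {2}(row_sum_delta u) (linear_comb_sum (f := fun X =>
  stateval (compress B (vec_mx X)) (marginal_obs q))).
  by rewrite mxE; apply: eq_bigr => p _; rewrite mxE.
by move=> a x y; rewrite linearP compressD compressZ statevalDl statevalZl.
Qed.

Lemma exists_null_marginal_compression :
  (0 < n)%N -> (2 * n ^ 2 - 1 < r * r)%N ->
  exists2 Y : 'M[C]_r, Y != 0 & null_marginals (compress B Y).
Proof.
move=> n_gt0 r_large.
have mx_weights : marginal_mx *m trace_weights = 0.
  apply/matrixP => p j; rewrite ord1 !mxE -[RHS](marginals_trace_weights
    (compress B (vec_mx (delta_mx 0 p)))).
  by apply: eq_bigr => q _; rewrite mxE.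
have rank_le : (\rank marginal_mx <= n * n + n * n - 1)%N.
  have /mxrankS : (marginal_mx <= kermx trace_weights)%MS by exact/sub_kermxP.
  rewrite mxrank_ker => /leq_trans; apply; rewrite leq_sub2l // lt0n mxrank_eq0.
  exact: trace_weights_neq0.
set u := nz_row (kermx marginal_mx).
have u_neq0 : u != 0.
  rewrite nz_row_eq0 -mxrank_eq0 mxrank_ker -lt0n subn_gt0.
  by apply: leq_ltn_trans rank_le _; rewrite mulnn addnn -mul2n.
have u_ker : u *m marginal_mx = 0 by apply/sub_kermxP; exact: nz_row_sub.
exists (vec_mx u); first by rewrite vec_mx_eq0.
apply: null_marginals_tunit => k.
  by have := marginal_mxE u (lshift _ k); rewrite u_ker mxE /marginal_obs split_lshift.
by have := marginal_mxE u (rshift _ k); rewrite u_ker mxE /marginal_obs split_rshift.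
Qed.

End DimensionCount.

(* One of [Y + ctrmx Y] and ['i (Y - ctrmx Y)] is nonzero. *)
Lemma hermitian_comb_neq0 (C : numClosedFieldType) r (Y : 'M[C]_r) : Y != 0 ->
  exists a b : C, ctrmx (a *: Y + b *: ctrmx Y) = a *: Y + b *: ctrmx Y
                  /\ a *: Y + b *: ctrmx Y != 0.
Proof.
move=> Y_neq0; have i_conj : ('i : C)^* = - 'i by rewrite conjCi.
case: (eqVneq (1 *: Y + 1 *: ctrmx Y) 0) => [skew|]; last first.
  by exists 1, 1; rewrite ctrmxD !ctrmxZ ctrmxK rmorph1 addrC.
exists 'i, (- 'i); split.
  by rewrite ctrmxD !ctrmxZ ctrmxK rmorphN /= i_conj opprK addrC.
have i_neq0 : ('i : C) != 0 by rewrite -normr_eq0 normCi oner_eq0.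
have -> : ctrmx Y = - Y by move/eqP: skew; rewrite !scale1r addrC addr_eq0 => /eqP.
rewrite scaleNr scalerN opprK -mulr2n -scaler_nat scalerA scaler_eq0 negb_or Y_neq0.
by rewrite mulf_eq0 negb_or i_neq0 pnatr_eq0.
Qed.

Lemma extremal_rank_sq_le (C : numClosedFieldType) n (D : 'M[C]_(n * n)) :
  (0 < n)%N -> extremal_Gamma D -> (\rank D * \rank D <= 2 * n ^ 2 - 1)%N.
Proof.
move=> n_gt0 D_ext; rewrite leqNgt; apply/negP => r_large.
have [Z hZ] : exists Z, row_base D = Z *m D by apply/submxP; rewrite eq_row_base.
have [C0 hC0] := row_freeP (row_base_free D).
have [Y Y_neq0 HY] := exists_null_marginal_compression (row_base D) n_gt0 r_large.
have [a [b [Y'_herm Y'_neq0]]] := hermitian_comb_neq0 Y_neq0.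
apply: extremal_rigid D_ext hZ hC0 Y'_herm Y'_neq0 _.
rewrite compressD !compressZ compress_ctrmx.
exact/null_marginals_comb/null_marginals_ctrmx.
Qed.

Theorem mainTheorem2 (C : numClosedFieldType) (n : nat) (hn : (1 <= n)%N)
  (D : 'M[C]_(n * n)) :
  extremal_Gamma D ->
  (\rank D)%:R <= sqrtC ((2 * n ^ 2 - 1)%N%:R : C).
Proof.
move=> D_ext; rewrite -(@sqrCK _ (\rank D)%:R) ?ler0n //.
rewrite ler_sqrtC ?nnegrE ?ler0n ?exprn_ge0 // -natrX ler_nat -mulnn.
exact: extremal_rank_sq_le.
Qed.
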